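(* Let $G$ be a finite simple graph with $n$ vertices, $m$ edges, and degree sequence $d(1),\dots,d(n)$. Then \[ \left(6k_3(G)-\sum_{i=1}^n d^2(i)+nm\right)\, bk(G)\;\ge\; n\,k_3(G)+8k_4(G)+2k_4^{(3)}(G). \]
   Context: A book of size $q$ is a set of $q$ triangles sharing a common edge; the booksize $bk(G)$ is the size of the largest book in $G$, i.e. the maximum over edges $uv$ of the number of common neighbours of $u$ and $v$. $k_s(G)$ denotes the number of $s$-cliques of $G$ (so $k_3(G)$ is the number of triangles and $k_4(G)$ the number of copies of $K_4$). $k_4^{(3)}(G)$ denotes the number of 4-vertex subsets of $V(G)$ inducing a subgraph isomorphic to a triangle together with an isolated vertex. *)

From mathcomp Require Import all_boot all_order all_algebra.
Set Implicit Arguments. Unset Strict Implicit. Unset Printing Implicit Defensive.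

Section Graph.
Variable (T : finType) (e : rel T).

Definition simple_graph := symmetric e /\ irreflexive e.

Definition deg (v : T) : nat := #|[set w | e v w]|.

Definition num_edges : nat := #|[set S : {set T} | (#|S| == 2) &&
   [forall u in S, forall v in S, (u != v) ==> e u v]]|.

Definition is_clique (S : {set T}) : bool :=
  [forall u in S, forall v in S, (u != v) ==> e u v].

Definition kcl (s : nat) : nat := #|[set S : {set T} | (#|S| == s) && is_clique S]|.

Definition codeg (u v : T) : nat := #|[set w | e u w && e v w]|.

(* booksize: max over edges uv of the number of common neighbours (0 if no edges) *)
Definition booksize : nat := \max_(p : T * T | e p.1 p.2) codeg p.1 p.2.

Definition tri_plus_iso (S : {set T}) : bool :=
  (#|S| == 4) && [exists x in S, is_clique (S :\ x) &&
                    [forall y in S, (y != x) ==> ~~ e x y]].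

Definition k4_3 : nat := #|[set S : {set T} | tri_plus_iso S]|.

End Graph.

From mathcomp Require Import all_boot all_order all_algebra.
From mathcomp Require Import zify.
Set Implicit Arguments. Unset Strict Implicit. Unset Printing Implicit Defensive.

(* Let g(u,v) count the vertices adjacent to both or to neither of u and v.
   Sorting the vertices by their adjacency to u and v gives
   g(u,v) + d(u) + d(v) = n + 2 codeg(u,v), so summed over ordered edges g is
   twice the left-hand factor of the theorem.  As codeg <= bk on edges, it
   suffices to bound the sum over ordered edges of g(u,v) codeg(u,v), which is
   the sum over ordered triangles uvw of g(u,v), i.e. of a third of
   g(u,v) + g(v,w) + g(u,w) = n + 2 (common neighbours of u, v, w)
   + 2 (common non-neighbours of u, v, w).  Summed over triangles, common
   neighbours count pairs (x, triangle in N(x)), at least four per K_4, and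
   common non-neighbours count pairs (x, triangle missing N(x) + x), at least one
   per induced triangle plus isolated vertex. *)

Lemma card_set_indicator (T : finType) (P : pred T) : #|[set x | P x]| = \sum_x P x.
Proof. by rewrite -sum1dep_card big_mkcond; apply: eq_bigr => x _; case: (P x). Qed.

Lemma forall_ordS n (P : pred 'I_n.+1) :
  [forall i, P i] = P ord0 && [forall i : 'I_n, P (lift ord0 i)].
Proof. by rewrite -!(big_andE xpredT) big_ord_recl. Qed.

Lemma forall_ord0 (P : pred 'I_0) : [forall i, P i].
Proof. by apply/forallP => -[]. Qed.

Definition pair_ffun (T : Type) (u v : T) : {ffun 'I_2 -> T} :=
  [ffun i : 'I_2 => nth u [:: u; v] i].

Definition triple_ffun (T : Type) (u v w : T) : {ffun 'I_3 -> T} :=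
  [ffun i : 'I_3 => nth u [:: u; v; w] i].

Lemma sum_ffun_ord2 (T : finType) (F : {ffun 'I_2 -> T} -> nat) :
  \sum_f F f = \sum_u \sum_v F (pair_ffun u v).
Proof.
rewrite pair_big /= (reindex (fun p : T * T => pair_ffun p.1 p.2)) //.
apply: onW_bij; exists (fun f : {ffun _ -> T} => (f ord0, f (lift ord0 ord0))) => [[u v] | f].
  by rewrite !ffunE.
by apply/ffunP => -[[|[|i]] lt_i2] //; rewrite ffunE; congr (f _); apply: val_inj.
Qed.

Lemma sum_ffun_ord3 (T : finType) (F : {ffun 'I_3 -> T} -> nat) :
  \sum_f F f = \sum_u \sum_v \sum_w F (triple_ffun u v w).
Proof.
rewrite !pair_big /= (reindex (fun p : T * T * T => triple_ffun p.1.1 p.1.2 p.2)) //.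
apply: onW_bij.
exists (fun f : {ffun _ -> T} => (f ord0, f (lift ord0 ord0), f (lift ord0 (lift ord0 ord0)))).
  by case=> [[u v] w]; rewrite !ffunE.
by move=> f; apply/ffunP => -[[|[|[|i]]] lt_i3] //; rewrite ffunE; congr (f _); apply: val_inj.
Qed.

Lemma card_inj_ffuns_imset (T : finType) (k : nat) (Q : {set T} -> bool) :
  #|[set f : {ffun 'I_k -> T} | injectiveb f && Q (f @: setT)]| =
  k`! * #|[set S : {set T} | (#|S| == k) && Q S]|.
Proof.
rewrite -!sum1dep_card.
rewrite (partition_big (fun f : {ffun 'I_k -> T} => f @: setT)
   (fun S => (#|S| == k) && Q S)); last first.
  by move=> f /andP[/injectiveP inj_f ->]; rewrite card_imset // cardsT card_ord eqxx.
rewrite big_distrr /=; apply: eq_bigr => S /andP[/eqP cardS QS].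
rewrite muln1 sum1dep_card.
transitivity #|[set f : {ffun 'I_k -> T} in ffun_on (mem S) | injectiveb f]|; last first.
  by rewrite card_inj_ffuns_on card_ord cardS ffactnn.
apply: eq_card => f; rewrite !inE.
case: (injectiveP f) => [inj_f|]; last by rewrite andbF.
rewrite andbT; apply/idP/idP => [/andP[_ /eqP <-] | /forallP f_S].
  by apply/forallP => x; apply: imset_f.
have imS : f @: setT == S.
  rewrite eqEcard card_imset // cardsT card_ord cardS leqnn andbT.
  by apply/subsetP => _ /imsetP[x _ ->]; apply: f_S.
by rewrite imS (eqP imS) QS.
Qed.

Lemma sum_card_incidence (I J : finType) (K : {set I}) (R : I -> J -> bool) :
  \sum_(i in K) #|[set j | R i j]| = \sum_j #|[set i in K | R i j]|.
Proof.
under eq_bigr do rewrite card_set_indicator.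
rewrite exchange_big; apply: eq_bigr => j _.
by rewrite card_set_indicator big_mkcond; apply: eq_bigr => i _; case: (i \in K).
Qed.

Lemma card_le_setD1 (T : finType) (x : T) (A B : {set {set T}}) :
  (forall S, S \in A -> x \in S /\ S :\ x \in B) -> #|A| <= #|B|.
Proof.
move=> AB; have inj_D1 : {in A &, injective (fun S => S :\ x)}.
  by move=> S1 S2 /AB[xS1 _] /AB[xS2 _] eqS; rewrite -(setD1K xS1) eqS setD1K.
rewrite -(card_in_imset inj_D1).
by apply/subset_leq_card/subsetP => _ /imsetP[S /AB[_ SB] ->].
Qed.

Section SimpleGraph.

Variables (T : finType) (e : rel T).
Hypotheses (sym_e : symmetric e) (irr_e : irreflexive e).

Lemma clique_subset (S R : {set T}) : is_clique e S -> R \subset S -> is_clique e R.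
Proof.
move=> /forall_inP clS /subsetP RS; apply/forall_inP => x /RS /clS /forall_inP clSx.
by apply/forall_inP => y /RS /clSx.
Qed.

Lemma clique_adj (S : {set T}) x y :
  is_clique e S -> x \in S -> y \in S -> x != y -> e x y.
Proof. by move=> /forall_inP clS /clS /forall_inP clSx /clSx /implyP. Qed.

Lemma inj_clique_ffunE k (f : {ffun 'I_k -> T}) :
  injectiveb f && is_clique e (f @: setT) =
  [forall i, forall j, (i != j) ==> e (f i) (f j)].
Proof.
apply/andP/forallP => [[/injectiveP inj_f cl_f] i | adj_f].
  apply/forallP => j; apply/implyP => neq_ij.
  by apply: (clique_adj cl_f); rewrite ?imset_f ?(inj_eq inj_f).
have adj_ij i j : i != j -> e (f i) (f j) by move/forallP: (adj_f i) => /(_ j) /implyP.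
have inj_f : injective f.
  move=> i j eq_fij; apply/eqP; apply: contraT => /adj_ij.
  by rewrite eq_fij irr_e.
split; first exact/injectiveP.
apply/forall_inP => _ /imsetP[i _ ->]; apply/forall_inP => _ /imsetP[j _ ->].
by apply/implyP => neq_fij; apply: adj_ij; apply: contraNneq neq_fij => ->.
Qed.

Definition cliques_in k (p : pred T) :=
  [set S : {set T} | [&& #|S| == k, is_clique e S & [forall y in S, p y]]].

Lemma kcl_cliques_in k : kcl e k = #|cliques_in k predT|.
Proof.
apply: eq_card => S; have allT : [forall y in S, predT y] by apply/forall_inP.
by rewrite !inE allT andbT.
Qed.

Lemma card_clique_ffuns k (p : pred T) :
  #|[set f : {ffun 'I_k -> T} |
      [forall i, forall j, (i != j) ==> e (f i) (f j)] && [forall i, p (f i)]]|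
  = k`! * #|cliques_in k p|.
Proof.
rewrite -(card_inj_ffuns_imset k (fun S => is_clique e S && [forall y in S, p y])).
apply: eq_card => f; rewrite !inE andbA inj_clique_ffunE.
congr (_ && _); apply/forallP/forall_inP => [p_f _ /imsetP[i _ ->] | p_f i].
  exact: p_f.
exact/p_f/imset_f.
Qed.

Lemma sum_adj : \sum_u \sum_v e u v = 2 * num_edges e.
Proof.
rewrite (_ : num_edges e = kcl e 2) // kcl_cliques_in -(card_clique_ffuns 2 predT).
rewrite card_set_indicator sum_ffun_ord2; apply: eq_bigr => u _; apply: eq_bigr => v _.
by rewrite !forall_ordS !forall_ord0 !ffunE /= (sym_e v u) !andbT andbb.
Qed.

Definition triangle u v w := [&& e u v, e u w & e v w].

Lemma sum_triangles_in (p : pred T) :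
  \sum_u \sum_v \sum_w [&& triangle u v w, p u, p v & p w] = 6 * #|cliques_in 3 p|.
Proof.
rewrite -[6]/(3`!) -card_clique_ffuns card_set_indicator sum_ffun_ord3.
apply: eq_bigr => u _; apply: eq_bigr => v _; apply: eq_bigr => w _.
rewrite !forall_ordS !forall_ord0 !ffunE /= (sym_e v u) (sym_e w u) (sym_e w v).
by rewrite /triangle; case: (e u v); case: (e u w); case: (e v w); rewrite //= !andbT.
Qed.

Definition edge_sum (F : T -> T -> nat) := \sum_u \sum_v e u v * F u v.

Definition triangle_sum (F : T -> T -> T -> nat) :=
  \sum_u \sum_v \sum_w triangle u v w * F u v w.

Lemma eq_edge_sum F G : (forall u v, F u v = G u v) -> edge_sum F = edge_sum G.
Proof. by move=> eqFG; apply: eq_bigr => u _; apply: eq_bigr => v _; rewrite eqFG. Qed.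

Lemma eq_triangle_sum F G :
  (forall u v w, F u v w = G u v w) -> triangle_sum F = triangle_sum G.
Proof.
move=> eqFG; apply: eq_bigr => u _; apply: eq_bigr => v _; apply: eq_bigr => w _.
by rewrite eqFG.
Qed.

Lemma edge_sumD F G : edge_sum (fun u v => F u v + G u v) = edge_sum F + edge_sum G.
Proof.
rewrite -big_split; apply: eq_bigr => u _; rewrite -big_split.
by apply: eq_bigr => v _; rewrite mulnDr.
Qed.

Lemma triangle_sumD F G :
  triangle_sum (fun u v w => F u v w + G u v w) = triangle_sum F + triangle_sum G.
Proof.
rewrite -big_split; apply: eq_bigr => u _; rewrite -big_split.
apply: eq_bigr => v _; rewrite -big_split.
by apply: eq_bigr => w _; rewrite mulnDr.
Qed.

Lemma triangle_sumMl c F :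
  triangle_sum (fun u v w => c * F u v w) = c * triangle_sum F.
Proof.
rewrite big_distrr; apply: eq_bigr => u _; rewrite big_distrr.
apply: eq_bigr => v _; rewrite big_distrr.
by apply: eq_bigr => w _; rewrite mulnCA.
Qed.

Lemma edge_sum_const c : edge_sum (fun _ _ => c) = 2 * num_edges e * c.
Proof. by rewrite -sum_adj big_distrl; apply: eq_bigr => u _; rewrite big_distrl. Qed.

Lemma triangle_sum_const c : triangle_sum (fun _ _ _ => c) = 6 * kcl e 3 * c.
Proof.
rewrite kcl_cliques_in -sum_triangles_in big_distrl; apply: eq_bigr => u _.
rewrite big_distrl; apply: eq_bigr => v _; rewrite big_distrl.
by apply: eq_bigr => w _; rewrite !andbT.
Qed.

Lemma edge_sum_codeg F :
  edge_sum (fun u v => F u v * codeg e u v) = triangle_sum (fun u v _ => F u v).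
Proof.
apply: eq_bigr => u _; apply: eq_bigr => v _.
rewrite /codeg card_set_indicator !big_distrr; apply: eq_bigr => w _ /=.
rewrite /triangle; case: (e u v); case: (e u w); case: (e v w);
  by rewrite /= ?mul0n ?mul1n ?muln0 ?muln1.
Qed.

Lemma triangle_sum_rotate F : triangle_sum (fun u v w => F v w u) = triangle_sum F.
Proof.
rewrite /triangle_sum exchange_big; apply: eq_bigr => v _.
rewrite exchange_big; apply: eq_bigr => w _; apply: eq_bigr => u _.
by rewrite /triangle (sym_e u v) (sym_e u w); case: (e v u); case: (e w u); case: (e v w).
Qed.

Lemma triangle_sum_swap F : triangle_sum (fun u v w => F u w v) = triangle_sum F.
Proof.
apply: eq_bigr => u _; rewrite exchange_big; apply: eq_bigr => w _; apply: eq_bigr => v _.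
by rewrite /triangle (sym_e v w); case: (e u v); case: (e u w); case: (e w v).
Qed.

Definition agree u v := #|[set x | e u x == e v x]|.

Definition common3 (q : rel T) u v w := #|[set x | [&& q u x, q v x & q w x]]|.

Lemma agree_deg u v : agree u v + (deg e u + deg e v) = #|T| + 2 * codeg e u v.
Proof.
rewrite /agree /deg /codeg -cardsT !card_set_indicator big_distrr -!big_split /=.
by apply: eq_bigr => x _; case: (e u x); case: (e v x).
Qed.

Lemma agree_triangle u v w :
  agree u v + agree v w + agree u w =
  #|T| + 2 * common3 e u v w + 2 * common3 [rel a b | ~~ e a b] u v w.
Proof.
rewrite /agree /common3 -cardsT !card_set_indicator !big_distrr -!big_split /=.
by apply: eq_bigr => x _; case: (e u x); case: (e v x); case: (e w x).
Qed.

Lemma edge_sum_deg : edge_sum (fun u v => deg e u + deg e v) = 2 * \sum_u deg e u ^ 2.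
Proof.
rewrite edge_sumD mul2n -addnn; congr (_ + _).
  by apply: eq_bigr => u _; rewrite -big_distrl /= /deg card_set_indicator mulnn.
rewrite /edge_sum exchange_big; apply: eq_bigr => v _.
rewrite -big_distrl /= /deg card_set_indicator.
by rewrite -mulnn; congr (_ * _); apply: eq_bigr => u _; rewrite sym_e.
Qed.

Lemma triangle_sum_common3 (q : rel T) :
  triangle_sum (common3 q) = 6 * \sum_x #|cliques_in 3 [pred y | q y x]|.
Proof.
transitivity (\sum_u \sum_v \sum_w \sum_x [&& triangle u v w, q u x, q v x & q w x]).
  apply: eq_bigr => u _; apply: eq_bigr => v _; apply: eq_bigr => w _.
  rewrite /common3 card_set_indicator big_distrr; apply: eq_bigr => x _.
  by case: (triangle u v w); rewrite /= ?mul1n.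
under eq_bigr => u _ do under eq_bigr => v _ do rewrite exchange_big.
under eq_bigr => u _ do rewrite exchange_big.
by rewrite exchange_big big_distrr; apply: eq_bigr => x _; exact: sum_triangles_in.
Qed.

Lemma cliques_in_setD1 (S : {set T}) x k (p : pred T) :
  x \in S -> #|S| = k.+1 -> is_clique e (S :\ x) -> {in S :\ x, forall y, p y} ->
  S :\ x \in cliques_in k p.
Proof.
move=> xS cardS clS pS; rewrite inE clS /=.
apply/andP; split; last exact/forall_inP.
by move: (cardsD1 x S); rewrite xS cardS add1n => -[<-].
Qed.

Lemma kcl4_le_sum_nbhd : 4 * kcl e 4 <= \sum_x #|cliques_in 3 [pred y | e y x]|.
Proof.
rewrite /kcl; set K := [set S | _].
have -> : 4 * #|K| = \sum_(S in K) #|[set x | x \in S]|.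
  rewrite mulnC -sum_nat_const; apply: eq_bigr => S; rewrite inE => /andP[/eqP cardS _].
  by rewrite -cardS; apply: eq_card => x; rewrite inE.
rewrite sum_card_incidence; apply: leq_sum => x _.
apply: (card_le_setD1 (x := x)) => S /setIdP[].
rewrite inE => /andP[/eqP cardS clS] xS; split=> //.
apply: cliques_in_setD1 => //; first exact: clique_subset (subD1set S x).
move=> y; rewrite in_setD1 => /andP[neq_yx yS]; exact: clique_adj clS yS xS neq_yx.
Qed.

Lemma k4_3_le_sum_nonnbhd : k4_3 e <= \sum_x #|cliques_in 3 [pred y | ~~ e y x]|.
Proof.
rewrite /k4_3; set TP := [set S | _].
pose isolated (S : {set T}) x := (x \in S) && (S :\ x \in cliques_in 3 [pred y | ~~ e y x]).
have TP_isolated S : S \in TP -> 0 < #|[set x | isolated S x]|.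
  rewrite inE => /andP[/eqP cardS /existsP[x /and3P[xS clS /forall_inP nadj_x]]].
  apply/card_gt0P; exists x; rewrite inE /isolated xS.
  apply: cliques_in_setD1 => // y; rewrite in_setD1 => /andP[neq_yx yS].
  by rewrite /= sym_e; move/implyP: (nadj_x y yS); apply.
apply: (@leq_trans (\sum_(S in TP) #|[set x | isolated S x]|)).
  by rewrite -sum1_card; apply: leq_sum.
rewrite sum_card_incidence; apply: leq_sum => x _.
apply: (card_le_setD1 (x := x)) => S.
by rewrite inE => /andP[_ /andP[]].
Qed.

Lemma edge_sum_agree :
  edge_sum agree + 2 * \sum_u deg e u ^ 2 = 2 * (#|T| * num_edges e + 6 * kcl e 3).
Proof.
rewrite -edge_sum_deg -edge_sumD (eq_edge_sum agree_deg) edge_sumD edge_sum_const.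
rewrite (edge_sum_codeg (fun _ _ => 2)) triangle_sum_const.
lia.
Qed.

Lemma edge_sum_agree_codeg_le :
  edge_sum (fun u v => agree u v * codeg e u v) <= edge_sum agree * booksize e.
Proof.
rewrite big_distrl; apply: leq_sum => u _; rewrite big_distrl; apply: leq_sum => v _.
rewrite /= -mulnA leq_mul2l; case euv: (e u v) => //=.
by rewrite leq_mul2l; apply/orP; right; apply: (leq_bigmax_cond (u, v)).
Qed.

Lemma triangle_sum_agree :
  3 * triangle_sum (fun u v _ => agree u v) =
  6 * kcl e 3 * #|T| + 2 * triangle_sum (common3 e) +
  2 * triangle_sum (common3 [rel a b | ~~ e a b]).
Proof.
transitivity (triangle_sum (fun u v w => agree u v + agree v w + agree u w)).
  rewrite !triangle_sumD (triangle_sum_rotate (fun u v _ => agree u v)).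
  by rewrite (triangle_sum_swap (fun u v _ => agree u v)) mulSn mulSn mul1n addnA.
by rewrite (eq_triangle_sum agree_triangle) 2!triangle_sumD triangle_sum_const !triangle_sumMl.
Qed.

Lemma booksize_bound :
  2 * (#|T| * kcl e 3 + 8 * kcl e 4 + 2 * k4_3 e) <= edge_sum agree * booksize e.
Proof.
have := edge_sum_agree_codeg_le; rewrite edge_sum_codeg.
have := triangle_sum_agree; rewrite !triangle_sum_common3.
have := k4_3_le_sum_nonnbhd; have := kcl4_le_sum_nbhd.
set A := \sum_x _; set B := \sum_x _; set Z := triangle_sum _.
lia.
Qed.

End SimpleGraph.

Local Open Scope ring_scope.

Theorem theorem1 (T : finType) (e : rel T) :
  simple_graph e ->
  ((6 * kcl e 3)%:Z - (\sum_(i : T) (deg e i) ^ 2)%:Z + (#|T| * num_edges e)%:Z)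
     * (booksize e)%:Z
  >= (#|T| * kcl e 3 + 8 * kcl e 4 + 2 * k4_3 e)%:Z.
Proof.
case=> sym_e irr_e.
move: (edge_sum_agree sym_e irr_e) (booksize_bound sym_e irr_e).
nia.
Qed.
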